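(* Let $n \ge 1$ and $K \ge 1$ be integers and let $M_0, M_1, \dots, M_{K-1}$ be $n \times n$ real matrices with nonnegative entries. For real $\tau > 0$ define $$M(\tau) = (M_0 + \tau I)(M_1 + \tau I)\cdots(M_{K-1} + \tau I),$$ where $I$ is the $n\times n$ identity matrix, and assume that $M(\tau)$ is irreducible and aperiodic (primitive) for every $\tau > 0$. For $\tau>0$ let $v(\tau) \in [0,1]^n$ denote the principal (Perron) eigenvector of $M(\tau)$, i.e. the unique eigenvector of $M(\tau)$ for its spectral radius whose entries are nonnegative and sum to $1$. Then the map $(0,\infty) \ni \tau \mapsto v(\tau) \in [0,1]^n$ (which is real-analytic) extends continuously to $\tau = 0$; that is, the limit $\lim_{\tau \to 0^+} v(\tau)$ exists.
   Context: An $n\times n$ nonnegative matrix is irreducible if its associated directed graph (edge $i\to j$ iff entry $(i,j)>0$) is strongly connected, and aperiodic if in addition the gcd of the lengths of its cycles is $1$. By Perron–Frobenius theory such a matrix has a simple positive real eigenvalue equal to its spectral radius, with an eigenvector having positive entries, unique up to scaling. Note that the unperturbed product $M_0M_1\cdots M_{K-1}$ itself need not be irreducible or aperiodic (it may even be the zero matrix). *)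

(* real numbers from Stdlib Reals.
   n x n real matrices are functions nat -> nat -> R, only entries with
   indices < n are meaningful; vectors are functions nat -> R. *)
From Stdlib Require Import Reals List Arith.
Open Scope R_scope.

Definition mat := nat -> nat -> R.
Definition vec := nat -> R.

Fixpoint rsum (n : nat) (f : nat -> R) : R :=
  match n with
  | O => 0
  | S k => rsum k f + f k
  end.

Definition idm : mat := fun i j => if Nat.eqb i j then 1 else 0.
Definition madd (A B : mat) : mat := fun i j => A i j + B i j.
Definition mscal (c : R) (A : mat) : mat := fun i j => c * A i j.
Definition mmul (n : nat) (A B : mat) : mat :=
  fun i j => rsum n (fun k => A i k * B k j).
Definition mvmul (n : nat) (A : mat) (x : vec) : vec :=
  fun i => rsum n (fun k => A i k * x k).

Fixpoint mprod (n : nat) (l : list mat) : mat :=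
  match l with
  | nil => idm
  | A :: l' => mmul n A (mprod n l')
  end.

Definition Mtau (n K : nat) (Ms : nat -> mat) (tau : R) : mat :=
  mprod n (map (fun k => madd (Ms k) (mscal tau idm)) (seq 0 K)).

Fixpoint walk (n : nat) (A : mat) (m : nat) (i j : nat) : Prop :=
  match m with
  | O => i = j
  | S m' => exists k, (k < n)%nat /\ 0 < A i k /\ walk n A m' k j
  end.

Definition irreducible (n : nat) (A : mat) : Prop :=
  forall i j, (i < n)%nat -> (j < n)%nat -> exists m, walk n A m i j.

Definition aperiodic (n : nat) (A : mat) : Prop :=
  forall d : nat,
    (forall m i, (i < n)%nat -> (0 < m)%nat -> walk n A m i i -> Nat.divide d m) ->
    d = 1%nat.

(* complex eigenvalue a + i b of A, with eigenvector x + i y <> 0 *)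
Definition is_complex_eigenvalue (n : nat) (A : mat) (a b : R) : Prop :=
  exists x y : vec,
    (exists i, (i < n)%nat /\ (x i <> 0 \/ y i <> 0)) /\
    forall i, (i < n)%nat ->
      mvmul n A x i = a * x i - b * y i /\
      mvmul n A y i = b * x i + a * y i.

Definition is_spectral_radius (n : nat) (A : mat) (r : R) : Prop :=
  (exists a b, is_complex_eigenvalue n A a b /\ sqrt (a * a + b * b) = r) /\
  (forall a b, is_complex_eigenvalue n A a b -> sqrt (a * a + b * b) <= r).

Definition is_perron_vector (n : nat) (A : mat) (v : vec) : Prop :=
  (forall i, (i < n)%nat -> 0 <= v i) /\
  rsum n v = 1 /\
  exists r, is_spectral_radius n A r /\
    forall i, (i < n)%nat -> mvmul n A v i = r * v i.

(* For tau > 0 the matrix M(tau) is nonnegative and irreducible, so its Perron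
   vector is its only nonnegative eigenvector with coordinate sum 1 (compare two
   such vectors through the largest ratio of their coordinates).  Hence
   "v(tau)_i < c" is expressed by a first-order formula over the real field in
   tau and c.  By quantifier elimination this formula is, in tau, a Boolean
   combination of polynomial sign conditions, each constant on some interval
   (0, eps); so for every level c, v(tau)_i eventually stays below c or
   eventually stays above it as tau -> 0+, and a bounded function with this
   property converges. *)

From Stdlib Require Import Reals List Arith Lra Lia Classical ClassicalEpsilon.
From mathcomp Require all_boot all_order all_algebra Rstruct polyrcf qe_rcf ordered_qelim zify.
Open Scope R_scope.

Lemma rsum_ext m f g : (forall k, (k < m)%nat -> f k = g k) -> rsum m f = rsum m g.
Proof.
  induction m as [|m IH]; simpl; intros Hfg; [reflexivity|].
  rewrite IH, Hfg; [reflexivity | lia | intros; apply Hfg; lia].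
Qed.

Lemma rsum_zero m : rsum m (fun _ => 0) = 0.
Proof. induction m as [|m IH]; simpl; [|rewrite IH]; ring. Qed.

Lemma rsum_lin m a b f g :
  rsum m (fun k => a * f k - b * g k) = a * rsum m f - b * rsum m g.
Proof. induction m as [|m IH]; simpl; [|rewrite IH]; ring. Qed.

Lemma rsum_nonneg m f : (forall k, (k < m)%nat -> 0 <= f k) -> 0 <= rsum m f.
Proof.
  induction m as [|m IH]; simpl; intros Hf; [lra|].
  assert (0 <= f m) by (apply Hf; lia).
  assert (0 <= rsum m f) by (apply IH; intros; apply Hf; lia). lra.
Qed.

Lemma rsum_ge_term m f : (forall k, (k < m)%nat -> 0 <= f k) ->
  forall k, (k < m)%nat -> f k <= rsum m f.
Proof.
  induction m as [|m IH]; simpl; intros Hf k Hk; [lia|].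
  assert (0 <= rsum m f) by (apply rsum_nonneg; intros; apply Hf; lia).
  destruct (Nat.eq_dec k m) as [->|Hkm]; [lra|].
  assert (0 <= f m) by (apply Hf; lia).
  assert (f k <= rsum m f) by (apply IH; [intros; apply Hf|]; lia). lra.
Qed.

Lemma rsum_nonneg_eq0 m f : (forall k, (k < m)%nat -> 0 <= f k) -> rsum m f = 0 ->
  forall k, (k < m)%nat -> f k = 0.
Proof.
  intros Hf Hs k Hk. pose proof (rsum_ge_term m f Hf k Hk). pose proof (Hf k Hk). lra.
Qed.

Lemma exists_argmax m (f : nat -> R) : (1 <= m)%nat ->
  exists j0, (j0 < m)%nat /\ forall j, (j < m)%nat -> f j <= f j0.
Proof.
  induction m as [|m IH]; intros Hm; [lia|].
  destruct (Nat.eq_dec m 0) as [->|Hm0].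
  - exists 0%nat. split; [lia|]. intros j Hj. replace j with 0%nat by lia. lra.
  - destruct IH as [j0 [Hj0 Hmax]]; [lia|].
    destruct (Rle_dec (f m) (f j0)) as [Hle|Hgt].
    + exists j0. split; [lia|]. intros j Hj.
      destruct (Nat.eq_dec j m) as [->|]; [assumption|]. apply Hmax; lia.
    + exists m. split; [lia|]. intros j Hj.
      destruct (Nat.eq_dec j m) as [->|]; [lra|].
      assert (f j <= f j0) by (apply Hmax; lia). lra.
Qed.

Lemma max_ratio_attained n (v w : vec) : (1 <= n)%nat ->
  (forall k, (k < n)%nat -> 0 < w k) ->
  exists c j0, (j0 < n)%nat /\ c * w j0 = v j0 /\ forall k, (k < n)%nat -> v k <= c * w k.
Proof.
  intros Hn Hw. destruct (exists_argmax n (fun j => v j / w j) Hn) as [j0 [Hj0 Hmax]].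
  exists (v j0 / w j0), j0. split; [exact Hj0|]. split.
  - field. specialize (Hw j0 Hj0). lra.
  - intros k Hk. specialize (Hmax k Hk). simpl in Hmax. specialize (Hw k Hk).
    apply (Rmult_le_compat_r (w k)) in Hmax; [|lra].
    unfold Rdiv in Hmax. rewrite Rmult_assoc, Rinv_l in Hmax by lra. lra.
Qed.

Definition nonneg_mat (n : nat) (A : mat) : Prop :=
  forall i j, (i < n)%nat -> (j < n)%nat -> 0 <= A i j.

Definition is_eigvec (n : nat) (A : mat) (x : vec) (lam : R) : Prop :=
  forall k, (k < n)%nat -> mvmul n A x k = lam * x k.

Definition is_stoch (n : nat) (x : vec) : Prop :=
  (forall k, (k < n)%nat -> 0 <= x k) /\ rsum n x = 1.

Definition has_stoch_eigvec_below (n : nat) (A : mat) (i : nat) (c : R) : Prop :=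
  exists x lam, is_stoch n x /\ is_eigvec n A x lam /\ x i < c.

Lemma mvmul_lin n A a b x y i :
  mvmul n A (fun k => a * x k - b * y k) i = a * mvmul n A x i - b * mvmul n A y i.
Proof.
  unfold mvmul. rewrite <- rsum_lin. apply rsum_ext. intros; ring.
Qed.

Lemma mprod_nonneg n l : Forall (nonneg_mat n) l -> nonneg_mat n (mprod n l).
Proof.
  induction 1 as [|A l HA Hl IH]; simpl; intros i j Hi Hj.
  - unfold idm. destruct (Nat.eqb i j); lra.
  - apply rsum_nonneg. intros k Hk. apply Rmult_le_pos; auto.
Qed.

Lemma Mtau_nonneg n K Ms tau : (forall k, (k < K)%nat -> nonneg_mat n (Ms k)) ->
  0 <= tau -> nonneg_mat n (Mtau n K Ms tau).
Proof.
  intros HMs Htau. apply mprod_nonneg, Forall_forall. intros A HA.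
  apply in_map_iff in HA as [k [<- Hk]]. apply in_seq in Hk.
  intros i j Hi Hj. specialize (HMs k ltac:(lia) i j Hi Hj).
  unfold madd, mscal, idm. destruct (Nat.eqb i j); nra.
Qed.

Section IrreducibleNonneg.
Variables (n : nat) (A : mat).
Hypothesis A_nonneg : nonneg_mat n A.
Hypothesis A_irr : irreducible n A.

Lemma nonneg_eigvec_zero_walk z lam : (forall k, (k < n)%nat -> 0 <= z k) ->
  is_eigvec n A z lam -> forall m j k, (j < n)%nat -> z j = 0 -> walk n A m j k -> z k = 0.
Proof.
  intros Hz Hev m. induction m as [|m IH]; simpl; intros j k Hj Hzj Hw.
  - subst; assumption.
  - destruct Hw as [l [Hl [HAjl Hw]]]. apply (IH l); auto.
    assert (Hsum : mvmul n A z j = 0) by (rewrite Hev by assumption; rewrite Hzj; ring).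
    assert (Hterm : A j l * z l = 0).
    { apply (rsum_nonneg_eq0 n (fun k => A j k * z k)); auto.
      intros; apply Rmult_le_pos; auto. }
    apply Rmult_integral in Hterm. destruct Hterm; lra.
Qed.

Lemma nonneg_eigvec_eq0 z lam j : (forall k, (k < n)%nat -> 0 <= z k) ->
  is_eigvec n A z lam -> (j < n)%nat -> z j = 0 -> forall k, (k < n)%nat -> z k = 0.
Proof.
  intros Hz Hev Hj Hzj k Hk. destruct (A_irr j k Hj Hk) as [m Hw].
  exact (nonneg_eigvec_zero_walk z lam Hz Hev m j k Hj Hzj Hw).
Qed.

Lemma stoch_eigvec_pos x lam : is_stoch n x -> is_eigvec n A x lam ->
  forall j, (j < n)%nat -> 0 < x j.
Proof.
  intros [Hx Hs] Hev j Hj. destruct (Rle_lt_or_eq_dec 0 (x j) (Hx j Hj)) as [|Hxj]; auto.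
  exfalso. rewrite (rsum_ext n x (fun _ => 0)), rsum_zero in Hs; [lra|].
  exact (nonneg_eigvec_eq0 x lam j Hx Hev Hj (eq_sym Hxj)).
Qed.

Lemma stoch_dim_pos x : is_stoch n x -> (1 <= n)%nat.
Proof. intros [_ Hs]. destruct n; [simpl in Hs; lra | lia]. Qed.

(* Take [c] minimal with [v <= c w]; [c w - v] is nonnegative and vanishes at
   some [j0], so its image under [A] is nonnegative at [j0], which reads
   [(rho - r) v j0 >= 0]. *)
Lemma stoch_eigval_le v r w rho : is_stoch n v -> is_eigvec n A v r ->
  is_stoch n w -> is_eigvec n A w rho -> r <= rho.
Proof.
  intros Hv Hevv Hw Hevw.
  pose proof (stoch_eigvec_pos v r Hv Hevv) as vpos.
  pose proof (stoch_eigvec_pos w rho Hw Hevw) as wpos.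
  destruct (max_ratio_attained n v w (stoch_dim_pos v Hv) wpos) as [c [j0 [Hj0 [Hcj0 Hle]]]].
  assert (Hgap : 0 <= mvmul n A (fun k => c * w k - 1 * v k) j0).
  { apply rsum_nonneg. intros k Hk. apply Rmult_le_pos; [auto|].
    specialize (Hle k Hk). lra. }
  rewrite mvmul_lin, Hevw, Hevv in Hgap by assumption.
  replace (c * (rho * w j0)) with (rho * v j0) in Hgap by (rewrite <- Hcj0; ring).
  specialize (vpos j0 Hj0). nra.
Qed.

Lemma stoch_eigvec_unique v r w rho : is_stoch n v -> is_eigvec n A v r ->
  is_stoch n w -> is_eigvec n A w rho -> forall i, (i < n)%nat -> v i = w i.
Proof.
  intros Hv Hevv Hw Hevw.
  assert (rho = r) as ->.
  { apply Rle_antisym; [apply (stoch_eigval_le w rho v r) | apply (stoch_eigval_le v r w rho)];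
      assumption. }
  pose proof (stoch_eigvec_pos w r Hw Hevw) as wpos.
  destruct (max_ratio_attained n v w (stoch_dim_pos v Hv) wpos) as [c [j0 [Hj0 [Hcj0 Hle]]]].
  set (z := fun k => c * w k - 1 * v k).
  assert (Hz : forall k, (k < n)%nat -> 0 <= z k) by (intros k Hk; specialize (Hle k Hk); unfold z; lra).
  assert (Hevz : is_eigvec n A z r).
  { intros k Hk. unfold z. rewrite mvmul_lin, Hevw, Hevv by assumption. ring. }
  assert (Hz0 : forall k, (k < n)%nat -> z k = 0)
    by (apply (nonneg_eigvec_eq0 z r j0); auto; unfold z; lra).
  assert (Hc : c = 1).
  { assert (Hsum : rsum n z = 0) by (rewrite (rsum_ext n z (fun _ => 0)); auto using rsum_zero).
    unfold z in Hsum. rewrite rsum_lin, (proj2 Hv), (proj2 Hw) in Hsum. lra. }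
  intros i Hi. specialize (Hz0 i Hi). unfold z in Hz0. subst c. lra.
Qed.

Lemma perron_coord_lt_iff v i c : is_perron_vector n A v -> (i < n)%nat ->
  (v i < c <-> has_stoch_eigvec_below n A i c).
Proof.
  intros [Hv [Hs [r [_ Hev]]]] Hi. split.
  - intros Hlt. exists v, r. repeat split; assumption.
  - intros [x [lam [Hx [Hevx Hlt]]]].
    rewrite (stoch_eigvec_unique v r x lam (conj Hv Hs) Hev Hx Hevx i Hi). exact Hlt.
Qed.

End IrreducibleNonneg.

Lemma perron_coord_bounds n A v i : is_perron_vector n A v -> (i < n)%nat -> 0 <= v i <= 1.
Proof.
  intros [Hv [Hs _]] Hi. split; [auto|]. rewrite <- Hs. apply rsum_ge_term; assumption.
Qed.

Definition near0 (P : R -> Prop) : Prop :=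
  exists d, 0 < d /\ forall t, 0 < t -> t < d -> P t.

Lemma near0_impl (P Q : R -> Prop) : (forall t, 0 < t -> P t -> Q t) -> near0 P -> near0 Q.
Proof. intros HPQ [d [Hd HP]]. exists d. split; auto. Qed.

Lemma near0_and (P Q : R -> Prop) : near0 P -> near0 Q -> near0 (fun t => P t /\ Q t).
Proof.
  intros [d1 [Hd1 HP]] [d2 [Hd2 HQ]]. exists (Rmin d1 d2). split; [now apply Rmin_pos|].
  intros t Ht Htd. pose proof (Rmin_l d1 d2). pose proof (Rmin_r d1 d2).
  split; [apply HP | apply HQ]; lra.
Qed.

(* The limit is the supremum of the levels eventually lying below [f]. *)
Lemma near0_limit_of_dichotomy (f : R -> R) lo hi :
  (forall t, 0 < t -> lo <= f t <= hi) ->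
  (forall c, near0 (fun t => f t < c) \/ near0 (fun t => c <= f t)) ->
  exists L, forall eps, 0 < eps -> near0 (fun t => Rabs (f t - L) < eps).
Proof.
  intros Hb Hdich. set (S := fun c => near0 (fun t => c <= f t)).
  assert (Sbound : bound S).
  { exists hi. intros c [d [Hd Hc]].
    specialize (Hc (d / 2) ltac:(lra) ltac:(lra)). specialize (Hb (d / 2) ltac:(lra)). lra. }
  assert (Slo : S lo) by (exists 1; split; [lra|]; intros t Ht _; apply Hb, Ht).
  destruct (completeness S Sbound (ex_intro _ lo Slo)) as [L [HLub HLleast]].
  exists L. intros eps Heps.
  assert (Hbelow : exists s, S s /\ L - eps / 2 < s).
  { apply NNPP. intros Hno. assert (L <= L - eps / 2); [|lra].
    apply HLleast. intros s Hs. apply Rnot_lt_le. intros Hlt. apply Hno. exists s; auto. }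
  destruct Hbelow as [s [Hs HLs]].
  destruct (Hdich (L + eps / 2)) as [Habove|Habove].
  - apply (near0_impl (fun t => f t < L + eps / 2 /\ s <= f t)); [|now apply near0_and].
    intros t _ [H1 H2]. apply Rabs_def1; lra.
  - specialize (HLub _ Habove). lra.
Qed.

Module Semialgebraic.
Import all_boot all_order all_algebra Rstruct polyrcf qe_rcf ordered_qelim zify.
Import Order.TTheory GRing.Theory Num.Theory.
Local Open Scope ring_scope.

Section Germs.
Variable F : rcfType.
Local Set Implicit Arguments.
Local Unset Strict Implicit.

Definition germ_const {T : Type} (g : F -> T) : Prop :=
  exists2 eps : F, 0 < eps & forall x y, 0 < x < eps -> 0 < y < eps -> g x = g y.

Lemma germ_const_cst T (a : T) : germ_const (fun _ => a).
Proof. by exists 1. Qed.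

Lemma eq_germ_const T (g1 g2 : F -> T) : g1 =1 g2 -> germ_const g1 -> germ_const g2.
Proof. by move=> eq_g [eps eps_gt0 H]; exists eps => // x y hx hy; rewrite -!eq_g (H x y). Qed.

Lemma germ_const_comp T U (h : T -> U) (g : F -> T) :
  germ_const g -> germ_const (fun x => h (g x)).
Proof. by move=> [eps eps_gt0 H]; exists eps => // x y hx hy; rewrite (H x y). Qed.

Lemma germ_const2 T U V (op : T -> U -> V) (g1 : F -> T) (g2 : F -> U) :
  germ_const g1 -> germ_const g2 -> germ_const (fun x => op (g1 x) (g2 x)).
Proof.
move=> [e1 e1_gt0 H1] [e2 e2_gt0 H2]; exists (Num.min e1 e2); first by rewrite lt_min e1_gt0.
move=> x y /andP[x_gt0]; rewrite lt_min => /andP[x1 x2] /andP[y_gt0]; rewrite lt_min => /andP[y1 y2].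
by rewrite (H1 x y) ?x_gt0 ?y_gt0 // (H2 x y) ?x_gt0 ?y_gt0.
Qed.

(* A nonzero polynomial has no root in [(0, next_root p 0 1)]. *)
Lemma germ_const_sgr_horner (p : {poly F}) : germ_const (fun x => Num.sg p.[x]).
Proof.
have [->|p_neq0] := eqVneq p 0.
  by apply: (eq_germ_const _ (germ_const_cst 0)) => x; rewrite horner0 sgr0.
exists (next_root p 0 1); first exact: next_root_gt.
by move=> x y hx hy; apply: (@sgr_neighpr_same _ p 0 1); rewrite /neighpr in_itv /= ?hx ?hy.
Qed.

Lemma eval_rterm_horner (e : seq F) (t : GRing.term F) : GRing.rterm t ->
  exists p : {poly F}, forall x, GRing.eval (set_nth 0 e 0 x) t = p.[x].
Proof.
elim: t => //=.
- case=> [|i] _; first by exists 'X => x; rewrite hornerX nth_set_nth.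
  by exists (nth 0 e i.+1)%:P => x; rewrite hornerC nth_set_nth.
- by move=> c _; exists c%:P => x; rewrite hornerC.
- by move=> k _; exists k%:R%:P => x; rewrite hornerC.
- move=> t1 IH1 t2 IH2 /andP[/IH1[p1 h1] /IH2[p2 h2]].
  by exists (p1 + p2) => x; rewrite hornerD h1 h2.
- by move=> t1 IH1 /IH1[p1 h1]; exists (- p1) => x; rewrite hornerN h1.
- by move=> t1 IH1 k /IH1[p1 h1]; exists (p1 *+ k) => x; rewrite hornerMn h1.
- move=> t1 IH1 t2 IH2 /andP[/IH1[p1 h1] /IH2[p2 h2]].
  by exists (p1 * p2) => x; rewrite hornerM h1 h2.
- by move=> t1 IH1 k /IH1[p1 h1]; exists (p1 ^+ k) => x; rewrite horner_exp h1.
Qed.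

Lemma germ_const_sgr_diff (e : seq F) (t1 t2 : GRing.term F) :
  GRing.rterm t1 -> GRing.rterm t2 ->
  germ_const (fun x => Num.sg (GRing.eval (set_nth 0 e 0 x) t2 - GRing.eval (set_nth 0 e 0 x) t1)).
Proof.
move=> /(eval_rterm_horner e)[p1 h1] /(eval_rterm_horner e)[p2 h2].
by apply: (eq_germ_const _ (germ_const_sgr_horner (p2 - p1))) => x; rewrite h1 h2 hornerD hornerN.
Qed.

Lemma germ_const_qf_eval (e : seq F) (f : ord.formula F) : ord.qf_form f -> ord.rformula f ->
  germ_const (fun x => ord.qf_eval (set_nth 0 e 0 x) f).
Proof.
elim: f => //=.
- by move=> b _ _; apply: germ_const_cst.
- move=> t1 t2 _ /andP[r1 r2].
  apply: (eq_germ_const _ (germ_const_comp (fun s => s == 0) (germ_const_sgr_diff e r1 r2))).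
  by move=> x; rewrite sgr_eq0 subr_eq0 eq_sym.
- move=> t1 t2 _ /andP[r1 r2].
  apply: (eq_germ_const _ (germ_const_comp (fun s => s == 1) (germ_const_sgr_diff e r1 r2))).
  by move=> x; rewrite sgr_cp0 subr_gt0.
- move=> t1 t2 _ /andP[r1 r2].
  apply: (eq_germ_const _ (germ_const_comp (fun s => s != -1) (germ_const_sgr_diff e r1 r2))).
  by move=> x; rewrite sgr_cp0 subr_lt0 -leNgt.
- by move=> f1 IH1 f2 IH2 /andP[q1 q2] /andP[r1 r2]; apply: germ_const2; [apply: IH1 | apply: IH2].
- by move=> f1 IH1 f2 IH2 /andP[q1 q2] /andP[r1 r2]; apply: germ_const2; [apply: IH1 | apply: IH2].
- by move=> f1 IH1 f2 IH2 /andP[q1 q2] /andP[r1 r2]; apply: germ_const2; [apply: IH1 | apply: IH2].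
- by move=> f1 IH1 q1 r1; apply: (germ_const_comp negb); apply: IH1.
Qed.

Definition definable (P : F -> Prop) : Prop :=
  exists (e : seq F) (f : ord.formula F), forall x, P x <-> ord.holds (set_nth 0 e 0 x) f.

Lemma holds_qe (e : seq F) (f : ord.formula F) :
  ord.holds e f <-> ord.qf_eval e (ord.quantifier_elim (@wproj F) (ord.to_rform f)).
Proof.
have rf := ord.to_rform_rformula f.
by split => [/ord.to_rformP|] /(ord.quantifier_elim_rformP (@wf_QE_wproj F) (@valid_QE_wproj F) _ rf) => [|/ord.to_rformP].
Qed.

(* Quantifier elimination makes a definable set of [F] a finite Boolean
   combination of polynomial sign conditions. *)
Lemma definable_germ (P : F -> Prop) : definable P ->
  exists2 eps : F, 0 < eps & forall x y, 0 < x < eps -> 0 < y < eps -> P x -> P y.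
Proof.
move=> [e [f HP]].
have /andP[qf rf] := ord.quantifier_elim_wf (@wf_QE_wproj F) (ord.to_rform_rformula f).
have [eps eps_gt0 H] := germ_const_qf_eval e qf rf.
by exists eps => // x y hx hy /HP /holds_qe; rewrite (H x y hx hy) => /holds_qe /HP.
Qed.

End Germs.

Lemma definable_near0_dichotomy (P : R -> Prop) : definable P ->
  near0 P \/ near0 (fun t => ~ P t).
Proof.
move=> /definable_germ[eps eps_gt0 HP].
have y_in : 0 < eps / 2%:R < eps by rewrite divr_gt0 //= ltr_pdivrMr // ltr_pMr // ltr1n.
have near x : Rlt 0 x -> Rlt x eps -> 0 < x < eps by move=> /RltP -> /RltP.
case: (classic (P (eps / 2%:R))) => [Py|nPy]; [left|right]; exists eps;
  (split; first exact/RltP) => t t_gt0 t_lt; have t_in := near t t_gt0 t_lt.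
- exact: (HP _ t y_in t_in Py).
- by move=> Pt; apply: nPy; apply: (HP t _ t_in y_in Pt).
Qed.

Section StochEigvecFormula.
Variables (n K : nat) (Ms : nat -> mat).
Local Notation term := (GRing.term R).
Local Notation formula := (ord.formula R).

Fixpoint term_rsum (m : nat) (f : nat -> term) : term :=
  match m with O => GRing.Const 0 | S m' => GRing.Add (term_rsum m' f) (f m') end.

Fixpoint formula_all (m : nat) (g : nat -> formula) : formula :=
  match m with O => ord.Bool true | S m' => ord.And (formula_all m' g) (g m') end.

Lemma eval_term_rsum e m f :
  GRing.eval e (term_rsum m f) = rsum m (fun k => GRing.eval e (f k)).
Proof. by elim: m => //= m ->. Qed.

Lemma holds_formula_all e m g :
  ord.holds e (formula_all m g) <-> (forall k, (k < m)%coq_nat -> ord.holds e (g k)).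
Proof.
elim: m => /= [|m ->]; first by split => // _ k /PeanoNat.Nat.nlt_0_r.
split => [[Hlt Hm] k /ssrnat.ltP|Hall].
  by rewrite ltnS leq_eqVlt => /orP[/eqP->|/ssrnat.ltP]; [|apply: Hlt].
split; last by apply/Hall/ssrnat.ltP.
by move=> k /ssrnat.ltP k_lt; apply/Hall/ssrnat.ltP/ltnW.
Qed.

(* Variable layout: [0 : tau], [1 : c], [k + 2 : x k] for [k < n], [n + 2 : lam]. *)
Definition shifted_entry_term k i j : term :=
  GRing.Add (GRing.Const (Ms k i j)) (GRing.Mul (GRing.Var _ 0) (GRing.Const (idm i j))).

Fixpoint mprod_term (l : list nat) (i j : nat) : term :=
  match l with
  | nil => GRing.Const (idm i j)
  | k :: l' => term_rsum n (fun m => GRing.Mul (shifted_entry_term k i m) (mprod_term l' m j))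
  end.

Lemma eval_mprod_term e l i j : GRing.eval e (mprod_term l i j) =
  mprod n (List.map (fun k => madd (Ms k) (mscal (nth 0 e 0) idm)) l) i j.
Proof. by elim: l i j => //= k l IH i j; rewrite eval_term_rsum; apply: rsum_ext => m _ /=; rewrite IH. Qed.

Definition x_term k : term := GRing.Var R (k + 2).

Definition stoch_eigvec_below_body i0 : formula :=
  ord.And (formula_all n (fun k => ord.Le (GRing.Const 0) (x_term k)))
  (ord.And (ord.Equal (term_rsum n x_term) (GRing.Const 1))
  (ord.And (formula_all n (fun k =>
      ord.Equal (term_rsum n (fun l => GRing.Mul (mprod_term (List.seq 0 K) k l) (x_term l)))
                (GRing.Mul (GRing.Var R (n + 2)) (x_term k))))
   (ord.Lt (x_term i0) (GRing.Var R 1)))).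

Definition stoch_eigvec_below_formula i0 : formula :=
  foldr (fun i f => ord.Exists i f) (stoch_eigvec_below_body i0) (iota 2 n.+1).

Lemma holds_foldr_exists e l (f : formula) :
  ord.holds e (foldr (fun i f => ord.Exists i f) f l) <->
  exists e', (forall j, j \notin l -> nth 0 e' j = nth 0 e j) /\ ord.holds e' f.
Proof.
elim: l e => /= [|i l IH] e.
  split=> [Hf|[e' [Hag Hf]]]; first by exists e.
  by apply: (ord.eq_holds _ Hf) => j; apply: Hag.
split=> [[x /IH[e' [Hag Hf]]]|[e' [Hag Hf]]].
  exists e'; split=> // j; rewrite in_cons negb_or => /andP[/negPf hji hjl].
  by rewrite Hag // nth_set_nth /= hji.
exists (nth 0 e' i); apply/IH; exists e'; split=> // j hj.
rewrite nth_set_nth /=; case: eqP => [->|/eqP hji] //.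
by apply: Hag; rewrite in_cons negb_or hji.
Qed.

Lemma holds_stoch_eigvec_below_formula i0 tau c : (i0 < n)%coq_nat ->
  ord.holds [:: tau; c] (stoch_eigvec_below_formula i0) <->
  has_stoch_eigvec_below n (Mtau n K Ms tau) i0 c.
Proof.
move=> i0_lt; rewrite holds_foldr_exists; split.
- move=> [e' [Hag]]; rewrite /= !holds_formula_all /= => [[Hnn [Hs [Hev Hlt]]]].
  have e'0 : nth 0 e' 0 = tau by rewrite Hag // mem_iota.
  have e'1 : nth 0 e' 1 = c by rewrite Hag // mem_iota.
  exists (fun k => nth 0 e' (k + 2)), (nth 0 e' (n + 2)); split; [split|split].
  + by move=> k k_lt; apply/RleP; exact: Hnn.
  + by rewrite eval_term_rsum in Hs.
  + move=> k k_lt; rewrite -[RHS](Hev k k_lt) /= eval_term_rsum /Mtau.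
    by apply: rsum_ext => l _ /=; rewrite eval_mprod_term e'0.
  + by apply/RltP; rewrite -e'1.
- move=> [x [lam [[Hnn Hs] [Hev Hlt]]]].
  set e' := [:: tau, c & mkseq x n ++ [:: lam]].
  have e'x k : (k < n)%coq_nat -> nth 0 e' (k + 2) = x k.
    by move=> /ssrnat.ltP k_lt; rewrite addn2 /= nth_cat size_mkseq k_lt nth_mkseq.
  have e'lam : nth 0 e' (n + 2) = lam by rewrite addn2 /= nth_cat size_mkseq ltnn subnn.
  exists e'; split.
  + move=> j; rewrite mem_iota negb_and -!ltnNge => /orP[|j_ge].
      by case: j => [|[|j]].
    by rewrite !nth_default //; rewrite /= ?size_cat ?size_mkseq /=; lia.
  + rewrite /= !holds_formula_all /=; split; [|split; [|split]].
    * by move=> k k_lt; rewrite e'x //; apply/RleP/Hnn.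
    * rewrite eval_term_rsum; etransitivity; last exact: Hs.
      by apply: rsum_ext => k k_lt /=; rewrite e'x.
    * move=> k k_lt; rewrite eval_term_rsum /= e'lam e'x //; etransitivity; last exact: Hev k k_lt.
      by apply: rsum_ext => l l_lt /=; rewrite e'x // eval_mprod_term.
    * by rewrite /= e'x //; apply/RltP.
Qed.

Lemma definable_has_stoch_eigvec_below i0 c : (i0 < n)%coq_nat ->
  definable (fun tau => has_stoch_eigvec_below n (Mtau n K Ms tau) i0 c).
Proof.
move=> i0_lt; exists [:: 0; c], (stoch_eigvec_below_formula i0) => tau.
by rewrite (holds_stoch_eigvec_below_formula i0 tau c i0_lt).
Qed.
End StochEigvecFormula.

End Semialgebraic.

Theorem mainTheorem1 (n K : nat) (Ms : nat -> mat)
  (hn : (1 <= n)%nat) (hK : (1 <= K)%nat)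
  (hnonneg : forall k i j, (k < K)%nat -> (i < n)%nat -> (j < n)%nat -> 0 <= Ms k i j)
  (hprim : forall tau, 0 < tau ->
     irreducible n (Mtau n K Ms tau) /\ aperiodic n (Mtau n K Ms tau))
  (v : R -> vec)
  (hv : forall tau, 0 < tau -> is_perron_vector n (Mtau n K Ms tau) (v tau)) :
  exists L : vec, forall i, (i < n)%nat ->
    forall eps, 0 < eps -> exists delta, 0 < delta /\
      forall tau, 0 < tau -> tau < delta -> Rabs (v tau i - L i) < eps.
Proof.
  assert (Hcoord : forall i, exists Li, (i < n)%nat -> forall eps, 0 < eps ->
            near0 (fun tau => Rabs (v tau i - Li) < eps)).
  { intros i. destruct (lt_dec i n) as [Hi|Hi]; [|exists 0; intros; lia].
    assert (Hiff : forall c tau, 0 < tau ->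
              (v tau i < c <-> has_stoch_eigvec_below n (Mtau n K Ms tau) i c)).
    { intros c tau Htau. apply perron_coord_lt_iff; auto; [|apply hprim, Htau].
      apply Mtau_nonneg; [|lra]. intros k Hk i' j' Hi' Hj'. auto. }
    destruct (near0_limit_of_dichotomy (fun tau => v tau i) 0 1) as [Li HLi].
    - intros tau Htau. exact (perron_coord_bounds _ _ _ i (hv tau Htau) Hi).
    - intros c. destruct (Semialgebraic.definable_near0_dichotomy _
        (Semialgebraic.definable_has_stoch_eigvec_below n K Ms i c Hi)) as [Hbelow|Habove].
      + left. revert Hbelow. apply near0_impl. intros tau Htau. apply Hiff, Htau.
      + right. revert Habove. apply near0_impl. intros tau Htau Hnot.
        apply Rnot_lt_le. intros Hlt. apply Hnot, Hiff; assumption.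
    - exists Li. intros _. exact HLi. }
  destruct (choice _ Hcoord) as [L HL]. exists L. exact HL.
Qed.
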